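(* Let $Q\in\mathrm{St}(n,r)$ and $\mathcal{I}=\{(i,j):V_{ij}=0\ \text{for all } V\in T_Q\mathrm{St}(n,r)\}$. Then: (i) if $(i,j)\in\mathcal{I}$, then $Q_{ij}\in\{\pm1\}$; (ii) if $(i,j)\notin\mathcal{I}$, then the set $\mathcal{Z}_{ij}:=\{Z\in\mathbb{R}^{n\times r}:(\mathbf{P}_QZ)_{ij}=0\}$ has zero Lebesgue measure.
   Context: $\mathrm{St}(n,r)=\{Q\in\mathbb{R}^{n\times r}:Q^\top Q=I_r\}$ is the Stiefel manifold, with tangent space $T_Q\mathrm{St}(n,r)=\{V\in\mathbb{R}^{n\times r}:Q^\top V+V^\top Q=0\}$, and $\mathbf{P}_Q(Z)=Z-Q(Q^\top Z+Z^\top Q)/2$ is the orthogonal projection of $Z\in\mathbb{R}^{n\times r}$ onto $T_Q\mathrm{St}(n,r)$. *)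

From HB Require Import structures.
From mathcomp Require Import all_boot all_order all_algebra.
From mathcomp Require Import boolp classical_sets reals.
Set Implicit Arguments. Unset Strict Implicit. Unset Printing Implicit Defensive.
Import Order.TTheory GRing.Theory Num.Theory.
Local Open Scope ring_scope.
Local Open Scope classical_set_scope.

Section Stiefel.
Variable R : realType.

Definition stiefel (n r : nat) (Q : 'M[R]_(n, r)) : Prop := Q^T *m Q = 1%:M.

Definition tangent (n r : nat) (Q V : 'M[R]_(n, r)) : Prop :=
  Q^T *m V + V^T *m Q = 0.

Definition projT (n r : nat) (Q Z : 'M[R]_(n, r)) : 'M[R]_(n, r) :=
  Z - 2^-1 *: (Q *m (Q^T *m Z + Z^T *m Q)).

Definition fixed_idx (n r : nat) (Q : 'M[R]_(n, r)) : set ('I_n * 'I_r) :=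
  [set ij | forall V, tangent Q V -> V ij.1 ij.2 = 0].

Definition lebesgue_null (m n : nat) (A : set 'M[R]_(m, n)) : Prop :=
  forall eps : R, 0 < eps ->
  exists a b : nat -> 'M[R]_(m, n),
    (forall k i j, a k i j <= b k i j) /\
    A `<=` \bigcup_k [set x | forall i j, a k i j <= x i j <= b k i j] /\
    (forall N : nat,
       \sum_(k < N) \prod_(i < m) \prod_(j < n) (b k i j - a k i j) <= eps).

End Stiefel.

(* (i) For k <> j the tangent vector Q (E_kj - E_jk) has (i, j) entry Q_ik, so
   if (i, j) is a fixed index the i-th row of Q vanishes off column j; the
   tangent vector P_Q(E_ij) then has (i, j) entry 1 - Q_ij^2, whence Q_ij = +-1.
   (ii) Z |-> (P_Q Z)_ij is a linear form, nonzero because P_Q fixes a tangent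
   V with V_ij <> 0; its kernel is a hyperplane.  On a hyperplane one
   coordinate is a linear function of the others, so its trace on a cube is
   covered by a fine grid of boxes of total volume O(mesh), and the hyperplane
   is the countable union of these traces. *)

From HB Require Import structures.
From mathcomp Require Import all_boot all_order all_algebra.
From mathcomp Require Import boolp classical_sets reals.
From mathcomp Require Import ring lra.
Import Order.TTheory GRing.Theory Num.Theory.
Local Open Scope ring_scope.
Local Open Scope classical_set_scope.
Set Implicit Arguments. Unset Strict Implicit. Unset Printing Implicit Defensive.

Section LevelEnumeration.
Variables (U : eqType) (x0 : U) (L : nat -> seq U).
Hypothesis L_neq0 : forall t, L t != [::].

Fixpoint levels_upto t : seq U :=
  if t is t'.+1 then levels_upto t' ++ L t else L 0.

(* Since every [L t] is nonempty, [levels_upto k] has more than [k] elements, so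
   [levels_enum] enumerates L 0 ++ L 1 ++ ... without ever reaching [x0]. *)
Definition levels_enum k : U := nth x0 (levels_upto k) k.

Lemma size_levels_upto t : (t < size (levels_upto t))%N.
Proof.
elim: t => [|t IHt] /=; first by rewrite lt0n size_eq0 L_neq0.
by rewrite size_cat -addn1 leq_add // lt0n size_eq0 L_neq0.
Qed.

Lemma nth_levels_upto t u k : (t <= u)%N -> (k < size (levels_upto t))%N ->
  nth x0 (levels_upto u) k = nth x0 (levels_upto t) k.
Proof.
move=> /subnKC <- kt.
suff [s ->] : exists s, levels_upto (t + (u - t)) = levels_upto t ++ s.
  by rewrite nth_cat kt.
elim: (u - t)%N => [|d [s IHd]]; first by exists [::]; rewrite addn0 cats0.
by exists (s ++ L (t + d).+1); rewrite addnS /= IHd catA.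
Qed.

Lemma levels_enumE t k : (k < size (levels_upto t))%N ->
  levels_enum k = nth x0 (levels_upto t) k.
Proof.
move=> kt; rewrite /levels_enum.
rewrite -(nth_levels_upto (leq_maxl k t)) ?size_levels_upto //.
exact: nth_levels_upto (leq_maxr k t) kt.
Qed.

Lemma mem_levels_upto t x : x \in levels_upto t -> exists u, x \in L u.
Proof.
elim: t => [|t IHt] /=; first by exists 0%N.
by rewrite mem_cat => /orP[/IHt // | xL]; exists t.+1.
Qed.

Lemma levels_upto_sub t : {subset L t <= levels_upto t}.
Proof. by case: t => [|t] //= x xL; rewrite mem_cat xL orbT. Qed.

Lemma levels_enum_mem k : exists t, levels_enum k \in L t.
Proof. exact/mem_levels_upto/mem_nth/size_levels_upto. Qed.

Lemma levels_enum_onto t x : x \in L t -> exists k, levels_enum k = x.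
Proof.
move=> /levels_upto_sub xt; exists (index x (levels_upto t)).
by rewrite (levels_enumE (t := t)) ?index_mem ?nth_index.
Qed.

Lemma sum_levels_upto (R : nmodType) (g : U -> R) t :
  \sum_(x <- levels_upto t) g x = \sum_(u < t.+1) \sum_(x <- L u) g x.
Proof.
elim: t => [|t IHt] /=; first by rewrite big_ord_recr big_ord0 /= add0r.
by rewrite big_cat IHt [in RHS]big_ord_recr.
Qed.

Lemma sum_levels_enum (R : numDomainType) (g : U -> R) N :
  (forall t x, x \in L t -> 0 <= g x) ->
  \sum_(k < N) g (levels_enum k) <= \sum_(t < N.+1) \sum_(x <- L t) g x.
Proof.
move=> g_ge0; have N_lt := size_levels_upto N.
have -> : \sum_(k < N) g (levels_enum k) =
    \sum_(0 <= k < N) g (nth x0 (levels_upto N) k).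
  rewrite big_mkord; apply: eq_bigr => k _.
  by rewrite (levels_enumE (ltn_trans (ltn_ord k) N_lt)).
rewrite -sum_levels_upto (big_nth x0).
rewrite [in X in _ <= X](big_cat_nat _ (n := N)) ?(ltnW N_lt) //=.
rewrite lerDl big_nat_cond sumr_ge0 // => k /andP[/andP[_ k_lt] _].
by have [u xu] := mem_levels_upto (mem_nth x0 k_lt); apply: g_ge0 xu.
Qed.

End LevelEnumeration.

Lemma sum_geometric_half (R : numFieldType) (eps : R) N :
  \sum_(t < N) eps / 2 ^+ t.+1 = eps - eps / 2 ^+ N.
Proof.
elim: N => [|N IHN]; first by rewrite big_ord0 expr0 divr1 subrr.
rewrite big_ord_recr /= IHN exprS.
have two_neq0 : (2 : R) ^+ N != 0 by rewrite expf_neq0 // pnatr_eq0.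
by field; rewrite two_neq0.
Qed.

Section Boxes.
Variables (R : realType) (n r : nat).
Local Notation M := 'M[R]_(n, r).

Definition box := (M * M)%type.

Definition box_wf (x : box) := forall i j, x.1 i j <= x.2 i j.

Definition in_box (x : box) (Z : M) := forall i j, x.1 i j <= Z i j <= x.2 i j.

Definition box_vol (x : box) : R := \prod_(i < n) \prod_(j < r) (x.2 i j - x.1 i j).

Definition jordan_null (A : set M) := forall eps : R, 0 < eps ->
  exists s : seq box, [/\ forall x, x \in s -> box_wf x,
    A `<=` [set Z | exists2 x, x \in s & in_box x Z] &
    \sum_(x <- s) box_vol x <= eps].

Lemma box_vol_ge0 x : box_wf x -> 0 <= box_vol x.
Proof. by move=> xwf; do 2!apply: prodr_ge0 => ? _; rewrite subr_ge0. Qed.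

Lemma lebesgue_null_jordan_cover (A : set M) (B : nat -> set M) :
  (0 < n)%N -> (0 < r)%N -> A `<=` \bigcup_t B t ->
  (forall t, jordan_null (B t)) -> lebesgue_null A.
Proof.
move=> n_gt0 r_gt0 AB Bnull eps eps_gt0.
have eps_t_gt0 t : 0 < eps / 2 ^+ t.+1 by rewrite divr_gt0 ?exprn_gt0.
have [s sP] := choice (fun t => Bnull t _ (eps_t_gt0 t)).
pose L t : seq box := (0, 0) :: s t.
(* Padding with the degenerate box (0, 0) costs nothing only because n, r > 0:
   in dimension 0 every box has volume 1. *)
have vol0 : box_vol (0, 0) = 0.
  rewrite /box_vol (bigD1 (Ordinal n_gt0)) //= (bigD1 (Ordinal r_gt0)) //=.
  by rewrite !mxE subrr !mul0r.
have L_wf t x : x \in L t -> box_wf x.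
  rewrite inE => /orP[/eqP -> i j | xs]; first by rewrite !mxE.
  by have [+ _ _] := sP t; apply.
have L_neq0 t : L t != [::] by [].
pose f := levels_enum (0, 0) L.
exists (fun k => (f k).1), (fun k => (f k).2); split; [|split].
- by move=> k; have [t] := levels_enum_mem (0, 0) L_neq0 k; apply: L_wf.
- move=> Z /AB [t _ ZB]; have [_ cover _] := sP t; have [x xs Zx] := cover _ ZB.
  have xL : x \in L t by rewrite inE xs orbT.
  have [k fk] := levels_enum_onto (0, 0) L_neq0 xL.
  by exists k => //=; rewrite /f fk.
- move=> N; change (\sum_(k < N) box_vol (f k) <= eps).
  apply: le_trans (sum_levels_enum (0, 0) L_neq0 N
    (fun t x xL => box_vol_ge0 (L_wf t x xL))) _.
  apply: le_trans (_ : \sum_(t < N.+1) eps / 2 ^+ t.+1 <= _); last first.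
    by rewrite sum_geometric_half gerBl divr_ge0 ?exprn_ge0 ?(ltW eps_gt0).
  by apply: ler_sum => t _; rewrite big_cons vol0 add0r; case: (sP t).
Qed.

Definition hyperplane (C : M) : set M :=
  [set Z | \sum_(x : 'I_n * 'I_r) C x.1 x.2 * Z x.1 x.2 = 0].

Definition cube (T : R) : set M := [set Z | forall i j, `|Z i j| <= T].

End Boxes.

Lemma grid_cell (R : realType) (T s y : R) (K : nat) :
  0 < s -> 2 * T = K.+1%:R * s -> - T <= y <= T ->
  exists k : 'I_K.+1, - T + k%:R * s <= y <= - T + k%:R * s + s.
Proof.
move=> s_gt0 Ts /andP[Ty yT]; set v := (y + T) / s.
have v_ge0 : 0 <= v by rewrite divr_ge0 ?(ltW s_gt0) //; lra.
have yv : y = - T + v * s by rewrite /v mulfVK ?gt_eqF //; lra.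
have vK : v <= K.+1%:R by rewrite /v ler_pdivrMr // -Ts; lra.
have /andP[trunc_le trunc_gt] := truncn_itv v_ge0.
pose k := minn K (Num.truncn v).
have [kv vk] : k%:R <= v /\ v <= k%:R + 1.
  rewrite /k natr1; case: leqP => [Kv | vK']; split=> //; last exact: ltW.
  by apply: le_trans trunc_le; rewrite ler_nat.
exists (inord k); rewrite inordK ?ltnS ?geq_minl // yv lerD2l ler_pM2r // kv /=.
by rewrite -addrA lerD2l -[X in _ <= _ + X]mul1r -mulrDl ler_pM2r.
Qed.

Section HyperplaneGrid.
Variables (R : realType) (n r : nat) (C : 'M[R]_(n, r)) (p0 : 'I_n * 'I_r).
Variables (T eps : R).
Hypotheses (C_p0 : C p0.1 p0.2 = 1) (T_gt0 : 0 < T) (eps_gt0 : 0 < eps).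
Local Notation idx := ('I_n * 'I_r)%type.

Let c (x : idx) := C x.1 x.2.
Let cnorm := \sum_(x : idx) `|c x|.
Let base := \prod_(x : idx | x != p0) (2 * T).
(* [K.+1] cells per axis bring the total volume 2 cnorm s base down to
   2 cnorm base (2 T) / K.+1 < eps. *)
Let K := Num.truncn (2 * cnorm * base * (2 * T) / eps).
Let s := 2 * T / K.+1%:R.
Let grid := {ffun idx -> 'I_K.+1}.
Let corner (m : grid) x := - T + (m x)%:R * s.
Let level (m : grid) := - \sum_(x | x != p0) c x * corner m x.
Let low (m : grid) x := if x == p0 then level m - cnorm * s else corner m x.
Let width x (k : 'I_K.+1) :=
  if x == p0 then (if k == ord0 then 2 * cnorm * s else 0) else s.
(* The coordinate [p0] is not discretised: it is pinned to within [cnorm * s]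
   of the value [level m] that the hyperplane equation predicts from the other
   coordinates, and grid points with [m p0 != ord0] only give flat cells. *)
Let cell (m : grid) : box R n r :=
  (\matrix_(i, j) low m (i, j),
   \matrix_(i, j) (low m (i, j) + width (i, j) (m (i, j)))).
Let cells := [seq cell m | m <- enum {: grid}].

Let s_gt0 : 0 < s. Proof. by rewrite divr_gt0 ?mulr_gt0 ?ltr0n. Qed.

Let cnorm_ge0 : 0 <= cnorm. Proof. exact: sumr_ge0. Qed.

Let width_ge0 x k : 0 <= width x k.
Proof.
rewrite /width; case: ifP => _; last exact: ltW.
case: ifP => _ //; exact: mulr_ge0 (mulr_ge0 (ler0n _ 2) cnorm_ge0) (ltW s_gt0).
Qed.

Let cell_wf m : box_wf (cell m).
Proof. by rewrite /box_wf => i j; rewrite !mxE lerDl. Qed.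

Let box_vol_cell m : box_vol (cell m) = \prod_(x : idx) width x (m x).
Proof.
rewrite /box_vol pair_bigA; apply: eq_bigr => x _ /=.
by rewrite !mxE addrAC subrr add0r -surjective_pairing.
Qed.

Let sum_box_vol_cells : \sum_(x <- cells) box_vol x <= eps.
Proof.
rewrite big_map big_enum /=; under eq_bigr do rewrite box_vol_cell.
rewrite -(bigA_distr_bigA width) (bigD1 p0) //=.
have -> : \sum_(k < K.+1) width p0 k = 2 * cnorm * s.
  rewrite (bigD1 ord0) //= big1 ?addr0 => [|k /negbTE k0]; first by rewrite /width !eqxx.
  by rewrite /width eqxx k0.
have -> : \prod_(x | x != p0) \sum_(k < K.+1) width x k = base.
  apply: eq_bigr => x /negbTE xp0; rewrite /width xp0 sumr_const card_ord.
  by rewrite /s -(mulr_natr (2 * T / _)) divfK ?pnatr_eq0.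
have K_gt0 : 0 < K.+1%:R :> R by rewrite ltr0n.
have -> : 2 * cnorm * s * base = 2 * cnorm * base * (2 * T) / K.+1%:R.
  by rewrite /s; field; rewrite addrC natr1 pnatr_eq0.
have := truncnS_gt (2 * cnorm * base * (2 * T) / eps); rewrite -/K ltr_pdivrMr // => G_lt.
by rewrite ler_pdivrMr // [eps * _]mulrC ltW.
Qed.

Let cells_cover :
  hyperplane C `&` cube T `<=` [set Z | exists2 x, x \in cells & in_box x Z].
Proof.
move=> Z [/= HZ Zb].
have Ts : 2 * T = K.+1%:R * s by rewrite /s [RHS]mulrC divfK ?pnatr_eq0.
have Z_bounded (x : idx) : - T <= Z x.1 x.2 <= T by rewrite -ler_norml.
have [u uP] := fin_all_exists (fun x => grid_cell s_gt0 Ts (Z_bounded x)).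
pose m : grid := [ffun x => if x == p0 then ord0 else u x].
have corner_Z x : x != p0 -> corner m x <= Z x.1 x.2 <= corner m x + s.
  by move=> xp0; rewrite /corner ffunE (negbTE xp0); apply: uP.
have level_Z : `|Z p0.1 p0.2 - level m| <= cnorm * s.
  have -> : Z p0.1 p0.2 - level m =
      \sum_(x | x != p0) c x * (corner m x - Z x.1 x.2).
    move: HZ; rewrite /hyperplane /= (bigD1 p0) //= C_p0 mul1r => /eqP.
    rewrite addr_eq0 => /eqP ->.
    by rewrite /level opprK addrC -sumrB; apply: eq_bigr => x _; rewrite mulrBr.
  apply: le_trans (ler_norm_sum _ _ _) _.
  apply: le_trans (_ : \sum_(x | x != p0) `|c x| * s <= _).
    apply: ler_sum => x xp0; rewrite normrM ler_wpM2l // ler_norml.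
    by have /andP[] := corner_Z x xp0; lra.
  rewrite -mulr_suml ler_wpM2r ?(ltW s_gt0) //.
  by rewrite /cnorm [X in _ <= X](bigD1 p0) //= lerDr.
exists (cell m); first by apply: map_f; rewrite mem_enum.
rewrite /in_box => i j; rewrite !mxE /low /width.
have [ijp0 | ijp0] := eqVneq (i, j) p0; last exact: corner_Z.
by move: level_Z; rewrite ffunE -ijp0 !eqxx ler_norml => /andP[]; lra.
Qed.

Lemma hyperplane_cube_cover : exists s : seq (box R n r),
  [/\ forall x, x \in s -> box_wf x,
    hyperplane C `&` cube T `<=` [set Z | exists2 x, x \in s & in_box x Z] &
    \sum_(x <- s) box_vol x <= eps].
Proof.
exists cells; split; [|exact: cells_cover | exact: sum_box_vol_cells].
by move=> _ /mapP[m _ ->]; apply: cell_wf.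
Qed.

End HyperplaneGrid.

Lemma matrix_entries_bounded (R : realType) m n (A : 'M[R]_(m, n)) :
  exists t : nat, forall i j, `|A i j| <= t%:R.
Proof.
exists (\sum_i \sum_j Num.truncn `|A i j|).+1 => i j.
apply/ltW/(lt_le_trans (truncnS_gt _)); rewrite ler_nat ltnS.
by rewrite (bigD1 i) //= (bigD1 j) //= -addnA leq_addr.
Qed.

Lemma hyperplaneZ (R : realType) n r (a : R) (C : 'M[R]_(n, r)) :
  a != 0 -> hyperplane (a *: C) = hyperplane C.
Proof.
move=> a_neq0; rewrite /hyperplane; apply: eq_set => Z /=.
have -> : \sum_x (a *: C) x.1 x.2 * Z x.1 x.2 = a * \sum_x C x.1 x.2 * Z x.1 x.2.
  by rewrite mulr_sumr; apply: eq_bigr => x _; rewrite mxE mulrA.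
apply/propext; split=> [/eqP | ->]; last by rewrite mulr0.
by rewrite mulf_eq0 (negbTE a_neq0) => /eqP.
Qed.

Lemma lebesgue_null_hyperplane (R : realType) n r (C : 'M[R]_(n, r)) :
  C != 0 -> lebesgue_null (hyperplane C).
Proof.
case/matrix0Pn => i [j Cij]; rewrite -(hyperplaneZ C (invr_neq0 Cij)).
set C1 := _ *: C.
apply: (lebesgue_null_jordan_cover (B := fun t => hyperplane C1 `&` cube t.+1%:R)).
- exact: leq_ltn_trans (leq0n i) (ltn_ord i).
- exact: leq_ltn_trans (leq0n j) (ltn_ord j).
- move=> Z CZ; have [t Zt] := matrix_entries_bounded Z; exists t => //; split=> // k l.
  by apply: le_trans (Zt k l) _; rewrite ler_nat.
- move=> t eps eps_gt0; apply: (@hyperplane_cube_cover _ _ _ _ (i, j)) => //.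
  by rewrite mxE mulVf.
Qed.

Section DeltaProducts.
Variables (R : pzSemiRingType) (m n p : nat).

Lemma mulmx_deltaE (A : 'M[R]_(m, n)) (k : 'I_n) (l : 'I_p) i j :
  (A *m delta_mx k l) i j = A i k *+ (l == j).
Proof.
rewrite mxE (bigD1 k) //= big1 ?addr0 //.
  by rewrite mxE eqxx mulr_natr eq_sym.
by move=> x /negbTE xk; rewrite mxE xk mulr0.
Qed.

Lemma delta_mulmxE (A : 'M[R]_(n, p)) (k : 'I_m) (l : 'I_n) i j :
  (delta_mx k l *m A) i j = A l j *+ (k == i).
Proof.
rewrite mxE (bigD1 l) //= big1 ?addr0 //.
  by rewrite mxE eqxx andbT mulr_natl eq_sym.
by move=> x /negbTE xl; rewrite mxE xl andbF mul0r.
Qed.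

End DeltaProducts.

Section Stiefel.
Variables (R : realType) (n r : nat).
Implicit Types (Q Z V : 'M[R]_(n, r)) (i : 'I_n) (j : 'I_r).

Lemma tangent_mulmx_skew Q (S : 'M[R]_r) :
  stiefel Q -> S^T = - S -> tangent Q (Q *m S).
Proof.
rewrite /stiefel /tangent => QtQ skewS.
by rewrite mulmxA QtQ mul1mx trmx_mul -mulmxA QtQ mulmx1 skewS addrN.
Qed.

Lemma tangent_projT Q Z : stiefel Q -> tangent Q (projT Q Z).
Proof.
rewrite /stiefel /tangent /projT => QtQ.
set A := Q^T *m Z + Z^T *m Q.
have At : A^T = A by rewrite /A linearD /= !trmx_mul !trmxK addrC.
rewrite mulmxBr -scalemxAr mulmxA QtQ mul1mx [(Z - _)^T]linearB /=.
rewrite [(2^-1 *: _)^T]linearZ /= trmx_mul At mulmxBl -scalemxAl -mulmxA QtQ mulmx1.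
rewrite addrACA -/A -opprD -scalerDl.
have -> : 2^-1 + 2^-1 = 1 :> R by field.
by rewrite scale1r subrr.
Qed.

Lemma projT_tangent Q V : tangent Q V -> projT Q V = V.
Proof. by rewrite /tangent /projT => ->; rewrite mulmx0 scaler0 subr0. Qed.

Lemma projT_is_linear Q : linear (projT Q).
Proof.
move=> a A B; rewrite /projT.
have -> : Q *m (Q^T *m (a *: A + B) + (a *: A + B)^T *m Q) =
    a *: (Q *m (Q^T *m A + A^T *m Q)) + Q *m (Q^T *m B + B^T *m Q).
  rewrite linearP /= linearP /= mulmxDl -scalemxAl addrACA -scalerDr.
  by rewrite [LHS]linearP.
by rewrite scalerBr scalerDr !scalerA [a * _]mulrC opprD addrACA.
Qed.

HB.instance Definition _ Q :=
  GRing.isLinear.Build R 'M[R]_(n, r) 'M[R]_(n, r) _ (projT Q) (projT_is_linear Q).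

Lemma projT_delta_diag Q i j :
  projT Q (delta_mx i j) i j = 1 - 2^-1 * (\sum_k Q i k ^+ 2 + Q i j ^+ 2).
Proof.
rewrite /projT !mxE !eqxx /=; congr (1 - 2^-1 * _).
under eq_bigr do rewrite mxE trmx_delta mulmx_deltaE delta_mulmxE eqxx mxE mulr1n.
rewrite (eq_bigr (fun k => Q i k ^+ 2 + Q i j ^+ 2 *+ (j == k))); last first.
  by move=> k _; rewrite mulrDr mulrnAr -!expr2; case: eqP => // <-.
rewrite big_split /=; congr (_ + _).
rewrite (bigD1 j) //= eqxx mulr1n big1 ?addr0 // => k.
by rewrite eq_sym => /negbTE ->.
Qed.

Lemma fixed_idx_row0 Q i j k :
  stiefel Q -> fixed_idx Q (i, j) -> k != j -> Q i k = 0.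
Proof.
move=> QtQ fixed_ij kj; pose S := delta_mx k j - delta_mx j k : 'M[R]_r.
have skewS : S^T = - S by rewrite linearB /= !trmx_delta opprB.
have := fixed_ij _ (tangent_mulmx_skew QtQ skewS).
rewrite /= mulmxBr mxE mulmx_deltaE mxE mulmx_deltaE eqxx (negbTE kj).
by rewrite mulr0n subr0.
Qed.

Lemma fixed_idx_sign Q i j :
  stiefel Q -> fixed_idx Q (i, j) -> Q i j = 1 \/ Q i j = -1.
Proof.
move=> QtQ fixed_ij.
have row_ij : \sum_k Q i k ^+ 2 = Q i j ^+ 2.
  rewrite (bigD1 j) //= big1 ?addr0 // => k kj.
  by rewrite (fixed_idx_row0 QtQ fixed_ij kj) expr0n.
have := fixed_ij _ (tangent_projT (delta_mx i j) QtQ).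
rewrite /= projT_delta_diag row_ij => /eqP.
have -> : 1 - 2^-1 * (Q i j ^+ 2 + Q i j ^+ 2) = 1 - Q i j ^+ 2 :> R by field.
by rewrite subr_eq0 eq_sym sqrf_eq1 => /orP[] /eqP; [left | right].
Qed.
Definition projT_coef Q i j : 'M[R]_(n, r) :=
  \matrix_(k, l) projT Q (delta_mx k l) i j.

Lemma projT_entry Q Z i j :
  projT Q Z i j = \sum_(x : 'I_n * 'I_r) projT_coef Q i j x.1 x.2 * Z x.1 x.2.
Proof.
rewrite -(pair_bigA _ (fun k l => projT_coef Q i j k l * Z k l)) /=.
rewrite {1}(matrix_sum_delta Z) linear_sum summxE; apply: eq_bigr => k _.
rewrite linear_sum summxE; apply: eq_bigr => l _.
by rewrite linearZ !mxE mulrC.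
Qed.

Lemma projT_entry_eq0 Q i j :
  [set Z | projT Q Z i j = 0] = hyperplane (projT_coef Q i j).
Proof. by rewrite /hyperplane; apply: eq_set => Z /=; rewrite projT_entry. Qed.

Lemma projT_coef_neq0 Q V i j :
  tangent Q V -> V i j != 0 -> projT_coef Q i j != 0.
Proof.
move=> tV; apply: contra_neq => coef0.
by rewrite -(projT_tangent tV) projT_entry coef0 big1 // => x _; rewrite mxE mul0r.
Qed.

End Stiefel.

Theorem proposition4p3 (R : realType) (n r : nat) (Q : 'M[R]_(n, r))
    (i : 'I_n) (j : 'I_r) :
  stiefel Q ->
  (fixed_idx Q (i, j) -> Q i j = 1 \/ Q i j = -1) /\
  (~ fixed_idx Q (i, j) ->
     lebesgue_null [set Z : 'M[R]_(n, r) | projT Q Z i j = 0]).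
Proof.
move=> QtQ; split; first exact: fixed_idx_sign.
move=> not_fixed; rewrite projT_entry_eq0; apply: lebesgue_null_hyperplane.
have [V tV Vij] : exists2 V, tangent Q V & V i j != 0.
  apply: contra_notP not_fixed => no_V V tV /=.
  by apply/eqP; apply: contra_notT no_V => Vij; exists V.
exact: projT_coef_neq0 tV Vij.
Qed.
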